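(* Let $(A,\cdot,\circ)$ be a skew brace and let $B$, $C$ be sub-skew braces of $A$. (a) If $A = B\cdot C$ and $B$ is a left ideal in $A$ or in $A^{\mathrm{op}}$, then $A = B\circ C$. (b) If $A = B\circ C$ and $B$ is a right ideal in $A$ or in $A^{\mathrm{op}}$, then $A = B\cdot C$.
   Context: A skew brace is a set $A$ with two group operations $\cdot$ (often written by juxtaposition) and $\circ$ such that $a\circ(bc) = (a\circ b)\,a^{-1}\,(a\circ c)$ for all $a,b,c\in A$. $a^{-1}$ denotes the inverse in $(A,\cdot)$. Define $a*b = a^{-1}(a\circ b)b^{-1}$, $\lambda_a(b)=a^{-1}(a\circ b)$, $\lambda^{\mathrm{op}}_a(b)=(a\circ b)a^{-1}$. A sub-skew brace is a subset that is a subgroup of both $(A,\cdot)$ and $(A,\circ)$. $A=B\cdot C$ means every element is $bc$ with $b\in B,c\in C$; $A=B\circ C$ similarly. A subgroup $I$ of $(A,\cdot)$ is a left ideal in $A$ iff $\lambda_a(x)\in I$ for all $a\in A,x\in I$, and a right ideal in $A$ iff $\lambda_x(a)a^{-1}\in I$ for all $x\in I,a\in A$. The opposite skew brace $A^{\mathrm{op}}$ is $A$ with $a\cdot^{\mathrm{op}}b=ba$ and the same $\circ$; $I$ is a left ideal in $A^{\mathrm{op}}$ iff $\lambda^{\mathrm{op}}_a(x)\in I$ for all $a\in A,x\in I$, and a right ideal in $A^{\mathrm{op}}$ iff $a^{-1}\lambda^{\mathrm{op}}_x(a)\in I$ for all $x\in I,a\in A$. *)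

Set Implicit Arguments.

Record group_ax (T : Type) (op : T -> T -> T) (inv : T -> T) (e : T) : Prop := {
  g_assoc : forall a b c, op a (op b c) = op (op a b) c;
  g_idl : forall a, op e a = a;
  g_idr : forall a, op a e = a;
  g_invl : forall a, op (inv a) a = e;
  g_invr : forall a, op a (inv a) = e
}.

Record SkewBrace := {
  sb_car :> Type;
  sb_mul : sb_car -> sb_car -> sb_car;
  sb_inv : sb_car -> sb_car;
  sb_one : sb_car;
  sb_circ : sb_car -> sb_car -> sb_car;
  sb_cinv : sb_car -> sb_car;
  sb_cone : sb_car;
  sb_mul_group : group_ax sb_mul sb_inv sb_one;
  sb_circ_group : group_ax sb_circ sb_cinv sb_cone;
  sb_compat : forall a b c,
    sb_circ a (sb_mul b c) = sb_mul (sb_mul (sb_circ a b) (sb_inv a)) (sb_circ a c)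
}.

Section SB.
Variable A : SkewBrace.
Local Notation mul := (sb_mul A).
Local Notation inv := (sb_inv A).
Local Notation circ := (sb_circ A).

Definition lam (a b : A) : A := mul (inv a) (circ a b).
Definition lam_op (a b : A) : A := mul (circ a b) (inv a).

Definition mul_subgroup (S : A -> Prop) : Prop :=
  S (sb_one A) /\ (forall x y, S x -> S y -> S (mul x y)) /\ (forall x, S x -> S (inv x)).
Definition circ_subgroup (S : A -> Prop) : Prop :=
  S (sb_cone A) /\ (forall x y, S x -> S y -> S (circ x y))
  /\ (forall x, S x -> S (sb_cinv A x)).

Definition sub_skew_brace (S : A -> Prop) : Prop := mul_subgroup S /\ circ_subgroup S.

Definition mul_factorizes (B C : A -> Prop) : Prop :=
  forall a : A, exists b c, B b /\ C c /\ a = mul b c.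
Definition circ_factorizes (B C : A -> Prop) : Prop :=
  forall a : A, exists b c, B b /\ C c /\ a = circ b c.

Definition left_ideal (I : A -> Prop) : Prop :=
  mul_subgroup I /\ forall a x, I x -> I (lam a x).
Definition right_ideal (I : A -> Prop) : Prop :=
  mul_subgroup I /\ forall x a, I x -> I (mul (lam x a) (inv a)).
(* left/right ideals in A^op (A with a .op b = b a and the same o) *)
Definition left_ideal_op (I : A -> Prop) : Prop :=
  mul_subgroup I /\ forall a x, I x -> I (lam_op a x).
Definition right_ideal_op (I : A -> Prop) : Prop :=
  mul_subgroup I /\ forall x a, I x -> I (mul (inv a) (lam_op x a)).
End SB.

Arguments lam {A}. Arguments lam_op {A}.
Arguments mul_subgroup {A}. Arguments circ_subgroup {A}.
Arguments sub_skew_brace {A}. Arguments mul_factorizes {A}. Arguments circ_factorizes {A}.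
Arguments left_ideal {A}. Arguments right_ideal {A}.
Arguments left_ideal_op {A}. Arguments right_ideal_op {A}.

(* Everything rests on two ways of writing the circle product through the
   lambda maps:  x o y = x . lam x y  and  x o y = lam_op x y . x,  together
   with the fact that lam and lam_op are actions of (A, o); in particular
   lam x (lam x' z) = z for the circle inverse x' of x, and likewise for lam_op.

   (a) Given a = c . b, we get a = c o lam c' b (resp. a = c o lam_op c' b for
       a = b . c).  A left ideal (resp. a left ideal of A^op) B contains the
       new second factor, so A = C o B, which is equivalent to A = B o C.
   (b) Given a = b o c, we get a = (b . (lam b c . c^{-1})) . c and
       a = c . ((c^{-1} . lam_op b c) . b); the bracketed factors lie in B
       when B is a right ideal of A (resp. of A^op). *)
Set Implicit Arguments.

Section GroupFacts.
Variables (T : Type) (op : T -> T -> T) (inv : T -> T) (e : T).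
Hypothesis G : group_ax op inv e.

Lemma g_cancl x y z : op x y = op x z -> y = z.
Proof.
  intro H.
  rewrite <- (g_idl G y), <- (g_idl G z), <- (g_invl G x), <- !(g_assoc G), H.
  reflexivity.
Qed.

Lemma g_uniqinv x y : op x y = e -> y = inv x.
Proof. intro H. apply (@g_cancl x). rewrite H, (g_invr G). reflexivity. Qed.

Lemma g_invinv x : inv (inv x) = x.
Proof. symmetry. apply g_uniqinv. apply (g_invl G). Qed.

Lemma g_invop x y : inv (op x y) = op (inv y) (inv x).
Proof.
  symmetry. apply g_uniqinv.
  rewrite (g_assoc G), <- (g_assoc G x), (g_invr G), (g_idr G), (g_invr G).
  reflexivity.
Qed.

Lemma g_inve : inv e = e.
Proof. rewrite <- (g_idr G (inv e)). apply (g_invl G). Qed.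

(* For inverse-closed subsets P, Q: if every element is a product q p then
   every element is a product p q (factor the inverse and invert back). *)
Lemma factor_swap (P Q : T -> Prop) :
  (forall x, P x -> P (inv x)) -> (forall x, Q x -> Q (inv x)) ->
  (forall a, exists q p, Q q /\ P p /\ a = op q p) ->
  forall a, exists p q, P p /\ Q q /\ a = op p q.
Proof.
  intros HP HQ H a. destruct (H (inv a)) as [q [p [Hq [Hp E]]]].
  exists (inv p), (inv q). split; [auto | split; [auto |]].
  rewrite <- (g_invinv a), E. apply g_invop.
Qed.
End GroupFacts.

Section LambdaMaps.
Variable A : SkewBrace.
Local Notation mul := (sb_mul A).
Local Notation inv := (sb_inv A).
Local Notation circ := (sb_circ A).
Local Notation cinv := (sb_cinv A).
Let MG := sb_mul_group A.
Let CG := sb_circ_group A.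

Lemma circ_one a : circ a (sb_one A) = a.
Proof.
  set (u := circ a (sb_one A)).
  assert (Hu : mul u (sb_one A) = mul u (mul (inv a) u)).
  { rewrite (g_idr MG), (g_assoc MG). unfold u.
    rewrite <- (sb_compat A a), (g_idl MG). reflexivity. }
  apply (g_cancl MG) in Hu.
  apply (@g_cancl _ _ _ _ MG (inv a)). rewrite <- Hu. symmetry. apply (g_invl MG).
Qed.

Lemma one_eq : sb_one A = sb_cone A.
Proof. rewrite <- (circ_one (sb_cone A)). symmetry. apply (g_idl CG). Qed.

Lemma circ_lam x y : circ x y = mul x (lam x y).
Proof. unfold lam. rewrite (g_assoc MG), (g_invr MG), (g_idl MG). reflexivity. Qed.

Lemma circ_lam_op x y : circ x y = mul (lam_op x y) x.
Proof. unfold lam_op. rewrite <- (g_assoc MG), (g_invl MG), (g_idr MG). reflexivity. Qed.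

Lemma lam_comp x y z : lam x (lam y z) = lam (circ x y) z.
Proof.
  unfold lam. assert (H := sb_compat A x y (mul (inv y) (circ y z))).
  rewrite (g_assoc MG), (g_invr MG), (g_idl MG), (g_assoc CG) in H.
  rewrite H, <- !(g_assoc MG), (g_assoc MG (inv _)), (g_invl MG), (g_idl MG).
  reflexivity.
Qed.

Lemma lam_cone z : lam (sb_cone A) z = z.
Proof.
  unfold lam. rewrite <- one_eq, (g_inve MG), (g_idl MG), one_eq, (g_idl CG).
  reflexivity.
Qed.

Lemma lam_op_comp x y z : lam_op x (lam_op y z) = lam_op (circ x y) z.
Proof.
  unfold lam_op. assert (H := sb_compat A x (mul (circ y z) (inv y)) y).
  rewrite <- (g_assoc MG), (g_invl MG), (g_idr MG), (g_assoc CG) in H.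
  rewrite H, <- (g_assoc MG), (g_invr MG), (g_idr MG). reflexivity.
Qed.

Lemma lam_op_cone z : lam_op (sb_cone A) z = z.
Proof.
  unfold lam_op. rewrite <- one_eq, (g_inve MG), (g_idr MG), one_eq, (g_idl CG).
  reflexivity.
Qed.

Lemma circ_lam_inv x z : circ x (lam (cinv x) z) = mul x z.
Proof. rewrite circ_lam, lam_comp, (g_invr CG), lam_cone. reflexivity. Qed.

Lemma circ_lam_op_inv x z : circ x (lam_op (cinv x) z) = mul z x.
Proof. rewrite circ_lam_op, lam_op_comp, (g_invr CG), lam_op_cone. reflexivity. Qed.

Lemma circ_as_mul b c : circ b c = mul (mul b (mul (lam b c) (inv c))) c.
Proof.
  rewrite circ_lam, <- !(g_assoc MG), (g_invl MG), (g_idr MG). reflexivity.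
Qed.

Lemma circ_as_mul_op b c : circ b c = mul c (mul (mul (inv c) (lam_op b c)) b).
Proof.
  rewrite circ_lam_op, !(g_assoc MG), (g_invr MG), (g_idl MG). reflexivity.
Qed.
End LambdaMaps.

Section Factorizations.
Variables (A : SkewBrace) (B C : A -> Prop).
Hypotheses (HB : sub_skew_brace B) (HC : sub_skew_brace C).
Let MG := sb_mul_group A.
Let CG := sb_circ_group A.

Let B_inv x : B x -> B (sb_inv A x).
Proof. apply (proj2 (proj2 (proj1 HB))). Qed.
Let C_inv x : C x -> C (sb_inv A x).
Proof. apply (proj2 (proj2 (proj1 HC))). Qed.
Let B_cinv x : B x -> B (sb_cinv A x).
Proof. apply (proj2 (proj2 (proj2 HB))). Qed.
Let C_cinv x : C x -> C (sb_cinv A x).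
Proof. apply (proj2 (proj2 (proj2 HC))). Qed.
Let B_mul x y : B x -> B y -> B (sb_mul A x y).
Proof. apply (proj1 (proj2 (proj1 HB))). Qed.

Let mul_factorizes_swap :
  mul_factorizes B C -> forall a, exists c b, C c /\ B b /\ a = sb_mul A c b.
Proof. apply (factor_swap MG); assumption. Qed.

Lemma circ_factorizes_of_left_ideal :
  mul_factorizes B C -> left_ideal B -> circ_factorizes B C.
Proof.
  intros HF [_ HL]. unfold circ_factorizes. apply (factor_swap CG); try assumption.
  intro a. destruct (mul_factorizes_swap HF a) as [c [b [Hc [Hb E]]]].
  exists c, (lam (sb_cinv A c) b). split; [assumption | split; [auto |]].
  rewrite circ_lam_inv. exact E.
Qed.

Lemma circ_factorizes_of_left_ideal_op :
  mul_factorizes B C -> left_ideal_op B -> circ_factorizes B C.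
Proof.
  intros HF [_ HL]. unfold circ_factorizes. apply (factor_swap CG); try assumption.
  intro a. destruct (HF a) as [b [c [Hb [Hc E]]]].
  exists c, (lam_op (sb_cinv A c) b). split; [assumption | split; [auto |]].
  rewrite circ_lam_op_inv. exact E.
Qed.

Lemma mul_factorizes_of_right_ideal :
  circ_factorizes B C -> right_ideal B -> mul_factorizes B C.
Proof.
  intros HF [_ HR] a. destruct (HF a) as [b [c [Hb [Hc E]]]].
  exists (sb_mul A b (sb_mul A (lam b c) (sb_inv A c))), c.
  split; [auto | split; [assumption |]].
  rewrite E. apply circ_as_mul.
Qed.

Lemma mul_factorizes_of_right_ideal_op :
  circ_factorizes B C -> right_ideal_op B -> mul_factorizes B C.
Proof.
  intros HF [_ HR]. unfold mul_factorizes. apply (factor_swap MG); try assumption.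
  intro a. destruct (HF a) as [b [c [Hb [Hc E]]]].
  exists c, (sb_mul A (sb_mul A (sb_inv A c) (lam_op b c)) b).
  split; [assumption | split; [auto |]].
  rewrite E. apply circ_as_mul_op.
Qed.
End Factorizations.

Theorem lemma2p7 (A : SkewBrace) (B C : A -> Prop) :
  sub_skew_brace B -> sub_skew_brace C ->
  (mul_factorizes B C -> left_ideal B \/ left_ideal_op B -> circ_factorizes B C) /\
  (circ_factorizes B C -> right_ideal B \/ right_ideal_op B -> mul_factorizes B C).
Proof.
  intros HB HC. split.
  - intros HF [HL | HL].
    + exact (circ_factorizes_of_left_ideal HB HC HF HL).
    + exact (circ_factorizes_of_left_ideal_op HB HC HF HL).
  - intros HF [HR | HR].
    + exact (mul_factorizes_of_right_ideal HB HF HR).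
    + exact (mul_factorizes_of_right_ideal_op HB HC HF HR).
Qed.
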